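(* Let $\Theta=\{\theta_1,\dots,\theta_n\}$ with $n\ge2$, and let $\rho\in\operatorname{int}\Delta$ be the uninformed Bob's (known) prior. Suppose $(\mathcal{E},C)$ satisfies Assumption (A') below. Then there exists a generalized contract $(u,d_1,\dots,d_n)$, with $u>0$ and all $d_i>0$, that screens the uninformed Bob. That is, $W_{\mathbf d}(\mu)\ge 0$ for every $\mu\in\Delta$, while $u-\min_i\rho_i d_i<0$. Assumption (A'): there exist $\varepsilon>0$, $\eta>0$ and $T\in\mathbb{R}_+$ such that for every $\mu\in\Delta$ with $\|\mu-\rho\|<\eta$ there is $E_\mu\in\mathcal{E}$ with $\Upsilon(E_\mu,\mu)>\varepsilon$ and $C(E_\mu,\mu)\le T$.
   Context: **States and beliefs.** $\Theta=\{\theta_1,\dots,\theta_n\}$ is finite and $\Delta$ is the simplex of probability vectors on $\Theta$; $\operatorname{int}\Delta$ denotes the vectors with all entries strictly positive. **Experiments.** An experiment is $E=(S,\chi)$, with $S$ a measurable signal space and $\chi(\theta_i)=P_i$ a probability measure on $S$. Let $\nu$ be a $\sigma$-finite measure dominating $P_1,\dots,P_n$ and $p_i=dP_i/d\nu$. Define $$\Upsilon(E,\mu)=\min_i\mu_i-\int_S\min_i\{\mu_ip_i(s)\}\,d\nu(s).$$ $\mathcal{E}$ is a set of available experiments, and $C:\mathcal{E}\times\Delta\to\mathbb{R}_+\cup\{\infty\}$ is a cost functional. **Generalized contract.** A generalized contract is $(u,d_1,\dots,d_n)$ with $u>0$ and $d_i>0$. If Bob accepts, he receives $u$ and announces a state.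 If the announced state $\theta_i$ is the realized state, he pays $d_i$. Rejecting gives $0$. **Informed Bob.** The informed Bob with prior $\mu$ may acquire no information or one experiment $E\in\mathcal{E}$ at cost $C(E,\mu)$. He then announces optimally. His payoff from accepting is $$W_{\mathbf d}(\mu)=\max\Big\{u-\min_i d_i\mu_i,\ \sup_{E\in\mathcal{E}}\Big[u-\int_S\min_i\{d_i\mu_ip_i(s)\}\,d\nu(s)-C(E,\mu)\Big]\Big\}.$$ **Uninformed Bob.** The uninformed Bob cannot learn and is a subjective expected-utility maximizer with prior $\rho$. His payoff from accepting is $u-\min_i\rho_id_i$. **Screening.** A generalized contract screens the uninformed Bob if $W_{\mathbf d}(\mu)\ge0$ for all $\mu\in\Delta$ and the uninformed Bob's payoff from accepting is strictly negative. *)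

From HB Require Import structures.
From mathcomp Require Import all_boot all_order all_algebra.
From mathcomp Require Import all_classical all_reals.
From mathcomp Require Import ereal measure lebesgue_measure lebesgue_integral probability.
Set Implicit Arguments. Unset Strict Implicit. Unset Printing Implicit Defensive.
Import Order.TTheory GRing.Theory Num.Theory.
Local Open Scope ring_scope.
Local Open Scope classical_set_scope.

(* States are indexed by 'I_n; beliefs are vectors mu : 'I_n -> R. *)
Definition in_simplex (R : realType) (n : nat) (mu : 'I_n -> R) : Prop :=
  (forall i, 0 <= mu i) /\ \sum_(i < n) mu i = 1.

Definition in_int_simplex (R : realType) (n : nat) (mu : 'I_n -> R) : Prop :=
  (forall i, 0 < mu i) /\ \sum_(i < n) mu i = 1.

Definition dist_vec (R : realType) (n : nat) (mu rho : 'I_n -> R) : R :=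
  Num.sqrt (\sum_(i < n) (mu i - rho i) ^+ 2).

(* min_i of a finite family (in the extended reals; equals the real minimum
   whenever n >= 1). *)
Definition emin (R : realType) (n : nat) (f : 'I_n -> \bar R) : \bar R :=
  \big[mine/+oo%E]_(i < n) f i.

(* An experiment E = (S, chi) with chi(theta_i) = P_i, together with a
   sigma-finite dominating measure nu and densities p_i = dP_i/dnu. *)
Record experiment (R : realType) (n : nat) := Experiment {
  sig_disp : measure_display;
  sig_space : measurableType sig_disp;
  exP : 'I_n -> probability sig_space R;
  exnu : {measure set sig_space -> \bar R};
  exnu_sfin : sigma_finite setT exnu;
  exdens : 'I_n -> sig_space -> R;
  exdens_meas : forall i, measurable_fun setT (exdens i);
  exdens_ge0 : forall i s, 0 <= exdens i s;
  exP_dens : forall i (A : set sig_space), measurable A ->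
    exP i A = (\int[exnu]_(s in A) (exdens i s)%:E)%E
}.
Arguments exdens {R n} e i s.
Arguments exnu {R n} e.
Arguments exP {R n} e i.

Definition Upsilon (R : realType) (n : nat) (E : experiment R n)
    (mu : 'I_n -> R) : \bar R :=
  (emin (fun i => (mu i)%:E)
   - \int[exnu E]_s emin (fun i => (mu i * exdens E i s)%:E))%E.

Definition W (R : realType) (n : nat) (Ecal : experiment R n -> Prop)
    (C : experiment R n -> ('I_n -> R) -> \bar R)
    (u : R) (d : 'I_n -> R) (mu : 'I_n -> R) : \bar R :=
  maxe (u%:E - emin (fun i => (d i * mu i)%:E))%E
    (ereal_sup [set x | exists E, Ecal E /\ x = (u%:E
        - \int[exnu E]_s emin (fun i => (d i * mu i * exdens E i s)%:E)
        - C E mu)%E]).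

Definition assumptionA' (R : realType) (n : nat) (Ecal : experiment R n -> Prop)
    (C : experiment R n -> ('I_n -> R) -> \bar R) (rho : 'I_n -> R) : Prop :=
  exists (eps eta T : R), 0 < eps /\ 0 < eta /\ 0 <= T /\
    forall mu : 'I_n -> R, in_simplex mu -> dist_vec mu rho < eta ->
      exists E, Ecal E /\ (eps%:E < Upsilon E mu)%E /\ (C E mu <= T%:E)%E.

Definition screens (R : realType) (n : nat) (Ecal : experiment R n -> Prop)
    (C : experiment R n -> ('I_n -> R) -> \bar R) (rho : 'I_n -> R)
    (u : R) (d : 'I_n -> R) : Prop :=
  (forall mu, in_simplex mu -> (0 <= W Ecal C u d mu)%E) /\
  (u%:E - emin (fun i => (rho i * d i)%:E) < 0)%E.

(* Let i0 minimize rho, let a := min(eta, eps/2, 1), del := a/n and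
   c := 4T/eps + 1.  The contract offers u := c(1 - del) and charges
   d_i := c / rho_i when the announced state theta_i occurs.
   - The uninformed Bob pays min_i rho_i d_i = c > u, so he rejects.
   - A belief mu at distance >= a from rho lowers some coordinate below
     (1 - del) rho_j (the coordinates of two beliefs sum to 1, so if all
     coordinates stayed above that level they would all be del-close, and
     then |mu - rho| < a); announcing theta_j without learning gives
     u - d_j mu_j >= 0.
   - A belief mu within a of rho (hence within eta) lets Bob buy the
     experiment E_mu of Assumption (A'): the expected payment is at most
     (c / rho_i0) int min_i mu_i p_i < (c / rho_i0)(mu_i0 - eps), which
     leaves a margin of at least c(eps/2 - del) - T >= 0 after the cost. *)
From HB Require Import structures.
From mathcomp Require Import all_boot all_order all_algebra.
From mathcomp Require Import all_classical all_reals.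
From mathcomp Require Import ereal measure lebesgue_measure lebesgue_integral probability.
From mathcomp Require Import measurable_realfun.
From mathcomp Require Import ring lra.
Import Order.TTheory GRing.Theory Num.Theory.
Local Open Scope ring_scope.
Local Open Scope classical_set_scope.
Set Implicit Arguments. Unset Strict Implicit. Unset Printing Implicit Defensive.

Section FiniteMinimum.
Variable R : realType.
Local Open Scope ereal_scope.

Lemma emin_le n (f : 'I_n -> \bar R) i : emin f <= f i.
Proof. by rewrite /emin (bigD1 i) //= ge_min lexx. Qed.

Lemma emin_ge n (f : 'I_n -> \bar R) x : (forall i, x <= f i) -> x <= emin f.
Proof.
move=> lexf; apply: (big_ind (fun y => x <= y)) => //; first exact: leey.
by move=> y z xy xz; rewrite le_min xy xz.
Qed.

Lemma emin_attained n (f : 'I_n -> R) : (0 < n)%N ->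
  exists j, emin (fun i => (f i)%:E) = (f j)%:E.
Proof.
move=> n_gt0; have [j _ fj_min] := @arg_minP _ R _ (Ordinal n_gt0) predT f isT.
exists j; apply/le_anti; rewrite emin_le /=.
by apply: emin_ge => i; rewrite lee_fin fj_min.
Qed.

Lemma emin_weighted_le n (w x : 'I_n -> R) (k : R) : (0 < n)%N ->
  (forall i, (0 <= x i)%R) -> (forall i, (w i <= k)%R) ->
  emin (fun i => (w i * x i)%:E) <= k%:E * emin (fun i => (x i)%:E).
Proof.
move=> n_gt0 x_ge0 w_le; have [j ->] := emin_attained x n_gt0.
by apply: le_trans (emin_le _ j) _; rewrite -EFinM lee_fin ler_wpM2r.
Qed.

Lemma measurable_emin d (S : measurableType d) n (F : 'I_n -> S -> \bar R) :
  (forall i, measurable_fun setT (F i)) ->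
  measurable_fun setT (fun s => emin (fun i => F i s)).
Proof.
move=> mF; rewrite /emin; elim: (index_enum _) => [|i r IH].
  by under eq_fun do rewrite big_nil; exact: measurable_cst.
by under eq_fun do rewrite big_cons; exact: measurable_mine.
Qed.

End FiniteMinimum.

Section ExperimentIntegrals.
Variables (R : realType) (n : nat) (E : experiment R n).
Local Open Scope ereal_scope.

Definition weighted_min (w : 'I_n -> R) (s : sig_space E) : \bar R :=
  emin (fun i => (w i * exdens E i s)%:E).

Lemma weighted_min_ge0 w s : (forall i, (0 <= w i)%R) -> 0 <= weighted_min w s.
Proof. by move=> w_ge0; apply: emin_ge => i; rewrite lee_fin mulr_ge0 ?exdens_ge0. Qed.

Lemma measurable_weighted_min w : measurable_fun setT (weighted_min w).
Proof.
apply: measurable_emin => i; apply/measurable_EFinP.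
by apply: measurable_funM; [exact: measurable_cst | exact: exdens_meas].
Qed.

Lemma integral_weighted_min_le (mu d : 'I_n -> R) (k : R) : (0 < n)%N ->
  (forall i, (0 <= mu i)%R) -> (forall i, (0 <= d i <= k)%R) ->
  \int[exnu E]_s weighted_min (fun i => d i * mu i)%R s
    <= k%:E * \int[exnu E]_s weighted_min mu s.
Proof.
move=> n_gt0 mu_ge0 d_bnd.
have k_ge0 : (0 <= k)%R by case/andP: (d_bnd (Ordinal n_gt0)); apply: le_trans.
have dmu_ge0 i : (0 <= d i * mu i)%R by rewrite mulr_ge0 //; case/andP: (d_bnd i).
rewrite -ge0_integralZl_EFin //; last first.
- exact: measurable_weighted_min.
- by move=> s _; exact: weighted_min_ge0.
apply: ge0_le_integral => //.
- by move=> s _; exact: weighted_min_ge0.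
- exact: measurable_weighted_min.
- by apply: measurable_funeM; exact: measurable_weighted_min.
move=> s _; rewrite /weighted_min.
under eq_fun do rewrite -mulrA.
apply: emin_weighted_le => // [i|i]; first by rewrite mulr_ge0 ?exdens_ge0.
by case/andP: (d_bnd i).
Qed.

End ExperimentIntegrals.

Section SimplexGeometry.
Variables (R : realType) (n : nat).
Implicit Types mu rho : 'I_n -> R.

Lemma simplex_coord_le1 mu j : in_simplex mu -> mu j <= 1.
Proof.
case=> mu_ge0; rewrite (bigD1 j) //= => <-.
by rewrite lerDl sumr_ge0.
Qed.

Lemma dist_vec_sqr mu rho :
  dist_vec mu rho ^+ 2 = \sum_(i < n) (mu i - rho i) ^+ 2.
Proof. by rewrite sqr_sqrtr // sumr_ge0 // => i _; exact: sqr_ge0. Qed.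

Lemma coord_le_dist mu rho i : `|mu i - rho i| <= dist_vec mu rho.
Proof.
rewrite -sqrtr_sqr ler_sqrt; last by rewrite sumr_ge0 // => k _; exact: sqr_ge0.
by rewrite (bigD1 i) //= lerDl sumr_ge0 // => k _; exact: sqr_ge0.
Qed.

(* If no coordinate of mu falls below the fraction (1 - del) of the
   corresponding coordinate of rho, then mu and rho are del-close
   coordinatewise: the deficit on one coordinate is balanced by the others. *)
Lemma coord_close_of_ratio mu rho del : in_simplex mu -> in_simplex rho ->
  0 <= del -> (forall j, (1 - del) * rho j <= mu j) ->
  forall j, `|mu j - rho j| <= del.
Proof.
move=> hmu hrho del_ge0 mu_ge j; have rhoj_le1 := simplex_coord_le1 j hrho.
case: hmu hrho => _ mu_sum [rho_ge0 rho_sum].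
have muj_ge := mu_ge j; have rhoj_ge0 := rho_ge0 j.
rewrite ler_norml; apply/andP; split; first nra.
rewrite (bigD1 j) //= in mu_sum; rewrite (bigD1 j) //= in rho_sum.
set Sm := \sum_(i < n | i != j) mu i in mu_sum.
set Sr := \sum_(i < n | i != j) rho i in rho_sum.
have Sm_ge : (1 - del) * Sr <= Sm by rewrite mulr_sumr ler_sum.
have Sr_le1 : Sr <= 1 by lra.
have : 0 <= del * (1 - Sr) by rewrite mulr_ge0 // subr_ge0.
nra.
Qed.

Lemma dist_lt_of_coord_close mu rho a : (1 < n)%N -> 0 < a ->
  (forall j, `|mu j - rho j| <= a / n%:R) -> dist_vec mu rho < a.
Proof.
move=> n_gt1 a_gt0 close; have n_gt0 : 0 < n%:R :> R by rewrite ltr0n ltnW.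
have sq_le j : (mu j - rho j) ^+ 2 <= (a / n%:R) ^+ 2.
  by move: (close j); rewrite ler_norml => /andP[? ?]; nra.
rewrite -(ltr_pXn2r (_ : 0 < 2)%N) ?nnegrE ?sqrtr_ge0 ?ltW // dist_vec_sqr.
apply: le_lt_trans (ler_sum _ (fun j _ => sq_le j)) _.
rewrite sumr_const card_ord.
have -> : (a / n%:R) ^+ 2 *+ n = a ^+ 2 / n%:R.
  by rewrite -mulr_natr; field; rewrite gt_eqF.
by rewrite ltr_pdivrMr // ltr_pMr ?exprn_gt0 // ltr1n.
Qed.

Lemma exists_coord_drop mu rho a : (1 < n)%N -> 0 < a ->
  in_simplex mu -> in_simplex rho -> a <= dist_vec mu rho ->
  exists j, mu j <= (1 - a / n%:R) * rho j.
Proof.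
move=> n_gt1 a_gt0 hmu hrho far.
apply: contrapT => no_drop; move: far; rewrite leNgt => /negP; apply.
apply: dist_lt_of_coord_close => //.
apply: coord_close_of_ratio => // [|j]; first by rewrite divr_ge0 // ltW.
by rewrite leNgt; apply/negP => drop; apply: no_drop; exists j; rewrite ltW.
Qed.

End SimplexGeometry.

Section ContractPayoffs.
Variables (R : realType) (n : nat) (rho : 'I_n -> R) (c del : R).
Hypothesis rho_gt0 : forall i, 0 < rho i.
Hypothesis c_gt0 : 0 < c.

(* The screening contract: Bob receives c (1 - del) and pays c / rho_i when
   the announced state theta_i occurs, so that the uninformed Bob's expected
   payment rho_i d_i = c is the same for every announcement. *)
Definition screening_transfer : R := c * (1 - del).
Definition screening_penalty (i : 'I_n) : R := c / rho i.

Lemma screening_penalty_gt0 i : 0 < screening_penalty i.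
Proof. exact: divr_gt0. Qed.

Local Open Scope ereal_scope.

Lemma uninformed_rejects : (0 < n)%N -> (0 < del)%R ->
  screening_transfer%:E - emin (fun i => (rho i * screening_penalty i)%:E) < 0.
Proof.
move=> n_gt0 del_gt0; have [j ->] := emin_attained (fun i => rho i * screening_penalty i)%R n_gt0.
rewrite /screening_penalty mulrC divfK ?gt_eqF // -EFinB lte_fin subr_lt0.
by rewrite /screening_transfer gtr_pMr // ltrBlDr ltrDl.
Qed.

Lemma uninformed_choice_accepts mu j : (mu j <= (1 - del) * rho j)%R ->
  0 <= screening_transfer%:E - emin (fun i => (screening_penalty i * mu i)%:E).
Proof.
move=> mu_low; apply: le_trans (leeB (lexx _) (emin_le _ j)).
rewrite -EFinB lee_fin subr_ge0 /screening_penalty mulrAC ler_pdivrMr //.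
by rewrite /screening_transfer -mulrA ler_wpM2l // ltW.
Qed.

Lemma informed_payment_le (E : experiment R n) mu i0 eps :
  in_simplex mu -> (forall i, rho i0 <= rho i)%R ->
  eps%:E < Upsilon E mu ->
  \int[exnu E]_s weighted_min (fun i => screening_penalty i * mu i)%R s
    <= (c / rho i0 * (mu i0 - eps))%:E.
Proof.
case=> mu_ge0 _ rho_min upsilon_gt.
have n_gt0 : (0 < n)%N by case: n i0 {rho_min} => [[]|].
set Imu := \int[exnu E]_s weighted_min mu s.
have Imu_ge0 : 0 <= Imu by apply: integral_ge0 => s _; exact: weighted_min_ge0.
have Imu_lt : Imu < (mu i0 - eps)%:E.
  have : eps%:E < (mu i0)%:E - Imu.
    by apply: (lt_le_trans upsilon_gt); apply: leeB (emin_le _ i0) (lexx _).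
  by rewrite lte_suber_addr // EFinB lteBrDr // addeC.
have penalty_le i : (0 <= screening_penalty i <= c / rho i0)%R.
  by rewrite ltW ?screening_penalty_gt0 //= ler_pM2l // lef_pV2 ?posrE.
apply: le_trans (integral_weighted_min_le E n_gt0 mu_ge0 penalty_le) _.
rewrite [leRHS]EFinM -/Imu; apply: lee_wpmul2l; last exact: ltW.
by rewrite lee_fin divr_ge0 ?ltW.
Qed.

(* Near rho, buying an experiment with Upsilon > eps at cost at most T keeps
   the informed Bob's payoff nonnegative: the payment saved is a fraction
   eps/2 of c, while the transfer gives up only a fraction del <= eps/4, and
   c eps/4 covers the cost. *)
Lemma informed_accepts (E : experiment R n) (cost : \bar R) mu i0 eps T :
  in_simplex mu -> (forall i, rho i0 <= rho i)%R -> (rho i0 <= 1)%R ->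
  (0 <= eps)%R -> (mu i0 - rho i0 < eps / 2)%R -> (del <= eps / 4)%R -> (T <= c * eps / 4)%R ->
  eps%:E < Upsilon E mu -> cost <= T%:E ->
  0 <= screening_transfer%:E
       - \int[exnu E]_s weighted_min (fun i => screening_penalty i * mu i)%R s
       - cost.
Proof.
move=> hmu rho_min rho_le1 eps_ge0 mu_near del_le T_le upsilon_gt cost_le.
have rho0_gt0 := rho_gt0 i0.
apply: le_trans (leeB (leeB (lexx _) (informed_payment_le hmu rho_min upsilon_gt)) cost_le).
rewrite -!EFinB lee_fin /screening_transfer mulrAC -mulrA.
have ratio_le : ((mu i0 - eps) / rho i0 <= 1 - eps / 2)%R.
  rewrite ler_pdivrMr //.
  by have := mulr_ge0 eps_ge0 (_ : 0 <= 1 - rho i0)%R; rewrite subr_ge0 => /(_ rho_le1); lra.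
have := ler_wpM2l (ltW c_gt0) ratio_le; have := ler_wpM2l (ltW c_gt0) del_le; lra.
Qed.

End ContractPayoffs.

(* The radius a of the neighbourhood of rho where Assumption (A') is used,
   together with the discount del = a/n of the contract. *)
Lemma screening_radius (R : realType) (n : nat) (eps eta : R) :
  (2 <= n)%N -> 0 < eps -> 0 < eta ->
  exists a, [/\ 0 < a <= eta, a <= eps / 2, 0 < a / n%:R < 1
              & a / n%:R <= eps / 4].
Proof.
move=> n_ge2 eps_gt0 eta_gt0; have n_gt0 : 0 < n%:R :> R by rewrite ltr0n ltnW.
exists (Num.min eta (Num.min (eps / 2) 1)); set a := Num.min _ _.
have a_gt0 : 0 < a by rewrite !lt_min eta_gt0 ltr01 divr_gt0.
have [a_le_eta a_le_eps a_le1] : [/\ a <= eta, a <= eps / 2 & a <= 1].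
  by rewrite !ge_min !lexx !orbT.
have del_le : a / n%:R <= a / 2 by rewrite ler_pM2l // lef_pV2 ?posrE // ler_nat.
have del_gt0 : 0 < a / n%:R by rewrite divr_gt0.
by split; rewrite ?a_gt0 ?del_gt0 //=; lra.
Qed.

Lemma screening_scale (R : realType) (eps T : R) : 0 < eps -> 0 <= T ->
  exists c, 0 < c /\ T <= c * eps / 4.
Proof.
move=> eps_gt0 T_ge0; exists (4 * T / eps + 1).
have ratio_ge0 : 0 <= 4 * T / eps by rewrite divr_ge0 ?mulr_ge0 // ltW.
have -> : (4 * T / eps + 1) * eps / 4 = T + eps / 4.
  by field; rewrite gt_eqF.
lra.
Qed.

Theorem proposition2 (R : realType) (n : nat) (hn : (2 <= n)%N)
    (rho : 'I_n -> R) (hrho : in_int_simplex rho)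
    (Ecal : experiment R n -> Prop)
    (C : experiment R n -> ('I_n -> R) -> \bar R)
    (hC : forall E mu, Ecal E -> in_simplex mu -> (0 <= C E mu)%E)
    (hA : assumptionA' Ecal C rho) :
  exists (u : R) (d : 'I_n -> R),
    0 < u /\ (forall i, 0 < d i) /\ screens Ecal C rho u d.
Proof.
have [eps [eta [T [eps_gt0 [eta_gt0 [T_ge0 experiment_near]]]]]] := hA.
have [rho_gt0 rho_sum] := hrho.
have rho_simplex : in_simplex rho by split=> // i; exact: ltW.
have n_gt0 : (0 < n)%N by apply: leq_trans hn.
have [i0 _ rho_minP] := @arg_minP _ R _ (Ordinal n_gt0) predT rho isT.
have rho_min i : rho i0 <= rho i := rho_minP i isT.
have [a [/andP[a_gt0 a_le_eta] a_le_eps /andP[del_gt0 del_lt1] del_le]] :=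
  screening_radius hn eps_gt0 eta_gt0.
have [c [c_gt0 T_le]] := screening_scale eps_gt0 T_ge0.
exists (screening_transfer c (a / n%:R)), (screening_penalty rho c).
split; first by rewrite mulr_gt0 // subr_gt0.
split; first exact: screening_penalty_gt0.
split; last exact: (uninformed_rejects rho_gt0 c_gt0 n_gt0 del_gt0).
move=> mu hmu; rewrite /W le_max; have [near|far] := ltP (dist_vec mu rho) a.
- have [E [E_avail [upsilon_gt cost_le]]] :=
    experiment_near mu hmu (lt_le_trans near a_le_eta).
  have mu_near : mu i0 - rho i0 < eps / 2.
    apply: le_lt_trans (ler_norm _) (le_lt_trans (coord_le_dist _ _ _) _).
    exact: lt_le_trans near a_le_eps.
  apply/orP; right; apply: le_trans (ereal_sup_ubound _); last by exists E.
  exact: (informed_accepts rho_gt0 c_gt0 hmu rho_min (simplex_coord_le1 i0 rho_simplex)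
            (ltW eps_gt0) mu_near del_le T_le upsilon_gt cost_le).
- have [j drop] := exists_coord_drop hn a_gt0 hmu rho_simplex far.
  by apply/orP; left; exact: (uninformed_choice_accepts rho_gt0 c_gt0 drop).
Qed.
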